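(* Let $(X,r)$ be a finite simple solution of the YBE such that $|X|$ is not a prime number. Then $(X,r)$ is irretractable.
   Context: A solution of the Yang–Baxter equation (YBE) is a pair $(X,r)$ where $X$ is a nonempty set and $r:X\times X\to X\times X$ is a map, written $r(x,y)=(\sigma_x(y),\gamma_y(x))$, such that $r^2=\mathrm{id}$, all maps $\sigma_x,\gamma_x:X\to X$ are bijective, and $r_{12}r_{23}r_{12}=r_{23}r_{12}r_{23}$ on $X^3$, where $r_{12}=r\times\mathrm{id}_X$, $r_{23}=\mathrm{id}_X\times r$. $(X,r)$ is irretractable if $\sigma_x\neq\sigma_y$ for all distinct $x,y\in X$. If $(Y,s)$ is another solution with $s(t,z)=(\sigma'_t(z),\gamma'_z(t))$, a homomorphism of solutions $f:(X,r)\to(Y,s)$ is a map $f:X\to Y$ with $f(\sigma_x(y))=\sigma'_{f(x)}(f(y))$ for all $x,y$; epimorphism = surjective homomorphism, isomorphism = bijective homomorphism. $(X,r)$ is simple if $|X|>1$ and every epimorphism of solutions $f:(X,r)\to(Y,s)$ is either an isomorphism or satisfies $|Y|=1$. *)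

From mathcomp Require Import all_boot.
Set Implicit Arguments. Unset Strict Implicit. Unset Printing Implicit Defensive.

(* A map r : X * X -> X * X, written r(x,y) = (sigma_x(y), gamma_y(x)). *)
Definition sigma_ {X : Type} (r : X * X -> X * X) (x y : X) : X := (r (x, y)).1.
Definition gamma_ {X : Type} (r : X * X -> X * X) (y x : X) : X := (r (x, y)).2.

Definition r12 {X : Type} (r : X * X -> X * X) (t : X * X * X) : X * X * X :=
  let: (a, b, c) := t in let: (a', b') := r (a, b) in (a', b', c).
Definition r23 {X : Type} (r : X * X -> X * X) (t : X * X * X) : X * X * X :=
  let: (a, b, c) := t in let: (b', c') := r (b, c) in (a, b', c').

Definition is_solution {X : Type} (r : X * X -> X * X) : Prop :=
  [/\ (forall p, r (r p) = p),
      (forall x, bijective (sigma_ r x)),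
      (forall x, bijective (gamma_ r x)) &
      (forall t, r12 r (r23 r (r12 r t)) = r23 r (r12 r (r23 r t)))].

Definition irretractable {X : Type} (r : X * X -> X * X) : Prop :=
  forall x y : X, x <> y -> sigma_ r x <> sigma_ r y.

Definition sol_hom {X Y : Type} (r : X * X -> X * X) (s : Y * Y -> Y * Y)
  (f : X -> Y) : Prop :=
  forall x y, f (sigma_ r x y) = sigma_ s (f x) (f y).

Definition simple_solution {X : Type} (r : X * X -> X * X) : Prop :=
  (exists x y : X, x <> y) /\
  forall (Y : Type) (s : Y * Y -> Y * Y) (f : X -> Y),
    is_solution s -> sol_hom r s f -> (forall y, exists x, f x = y) ->
    bijective f \/ (exists y0 : Y, forall y, y = y0).

From mathcomp Require Import all_boot.
Set Implicit Arguments. Unset Strict Implicit. Unset Printing Implicit Defensive.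

(* Write x ~ y when sigma_x = sigma_y.  The relation ~ is
   compatible with r: on a finite set, sigma_c p ~ sigma_c q is equivalent to
   p ~ q, and the gamma maps respect ~ as well.  Hence r descends to a
   solution on the finite set Ret(X) of the maps sigma_x (the retraction), and
   x |-> sigma_x is an epimorphism onto it.  By simplicity it is either
   bijective, which is irretractability, or Ret(X) is a point, i.e. all the
   sigma_x equal one permutation t.  In the latter case every map g with
   g o t = u o g for a permutation u is an epimorphism onto the permutation
   solution (x,y) |-> (u y, u^-1 x); if t is not transitive, the indicator of
   an orbit gives such a map onto a 2-element set, and if t is an n-cycle,
   reading the position in the cycle modulo the least prime divisor p of n
   gives one onto Z/p.  Simplicity then forces |X| = 2 or |X| = p, so |X| is
   prime. *)

Lemma surj_bijective (T : finType) (g : T -> T) :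
  (forall y, exists x, g x = y) -> bijective g.
Proof.
move=> g_onto; have g_codom y : y \in codom g.
  by have [x <-] := g_onto y; apply: codom_f.
pose h y := iinv (g_codom y).
have gK : cancel h g by move=> y; apply: f_iinv.
exact: (bij_can_bij (injF_bij (can_inj gK)) gK).
Qed.

Lemma r_pair (X : Type) (r : X * X -> X * X) a b :
  r (a, b) = (sigma_ r a b, gamma_ r b a).
Proof. by rewrite /sigma_ /gamma_; case: (r (a, b)). Qed.

Section SolutionIdentities.
Variables (X : Type) (r : X * X -> X * X).
Hypothesis solr : is_solution r.

Lemma sigma_inj a : injective (sigma_ r a).
Proof. by case: solr => _ sigma_bij _ _; apply: bij_inj. Qed.

(* First component of r^2 = id. *)
Lemma sigma_sigma_gamma a b : sigma_ r (sigma_ r a b) (gamma_ r b a) = a.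
Proof. by case: solr => invol _ _ _; have := invol (a, b); rewrite !r_pair; case. Qed.

(* First component of the braid relation. *)
Lemma sigma_braid a b c :
  sigma_ r a (sigma_ r b c) = sigma_ r (sigma_ r a b) (sigma_ r (gamma_ r b a) c).
Proof.
by case: solr => _ _ _ braid; have := braid (a, b, c); rewrite /r12 /r23 !r_pair; case.
Qed.

End SolutionIdentities.

Lemma quotient_solution (X : Type) (Y : finType) (r : X * X -> X * X)
    (s : Y * Y -> Y * Y) (f : X -> Y) :
  is_solution r -> (forall y, exists x, f x = y) ->
  (forall a b, s (f a, f b) = (f (r (a, b)).1, f (r (a, b)).2)) ->
  is_solution s.
Proof.
move=> [invol sigma_bij gamma_bij braid] f_onto s_f.
have s_fp p : s (f p.1, f p.2) = (f (r p).1, f (r p).2) by case: p.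
split.
- case=> A B; have [a <-] := f_onto A; have [b <-] := f_onto B.
  by rewrite s_f s_fp invol.
- move=> A; have [a <-] := f_onto A; apply: surj_bijective => B.
  have [c <-] := f_onto B; have [g _ gK] := sigma_bij a.
  by exists (f (g c)); rewrite /sigma_ s_f r_pair /= gK.
- move=> B; have [b <-] := f_onto B; apply: surj_bijective => A.
  have [c <-] := f_onto A; have [g _ gK] := gamma_bij b.
  exists (f (g c)); rewrite /gamma_ s_f r_pair /=.
  by have := gK c; rewrite /gamma_ => ->.
- pose f3 (t : X * X * X) := (f t.1.1, f t.1.2, f t.2).
  have s12 t : r12 s (f3 t) = f3 (r12 r t).
    by case: t => [[a b] c]; rewrite /r12 /f3 /= s_f; case: (r (a, b)).
  have s23 t : r23 s (f3 t) = f3 (r23 r t).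
    by case: t => [[a b] c]; rewrite /r23 /f3 /= s_f; case: (r (b, c)).
  case=> [[A B] C]; have [a <-] := f_onto A; have [b <-] := f_onto B.
  have [c <-] := f_onto C; rewrite -[(f a, f b, f c)]/(f3 (a, b, c)).
  by rewrite !(s12, s23) braid.
Qed.

Section Retraction.
Variables (X : finType) (r : X * X -> X * X).
Hypothesis solr : is_solution r.

(* sigma_x as a finite function, so that x ~ y is decidable and the classes
   of ~ form a finite type. *)
Definition sigma_ffun (x : X) : {ffun X -> X} := finfun (sigma_ r x).

Definition ret_equiv (x y : X) : bool := sigma_ffun x == sigma_ffun y.

Lemma ret_equivP x y : reflect (sigma_ r x =1 sigma_ r y) (ret_equiv x y).
Proof.
apply: (iffP eqP) => [E z|E]; last by apply/ffunP => z; rewrite !ffunE.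
by have := congr1 (fun g : {ffun X -> X} => g z) E; rewrite !ffunE.
Qed.

Lemma ret_equiv_cancel c p q :
  ret_equiv (sigma_ r c p) (sigma_ r c q) -> ret_equiv p q.
Proof.
move/ret_equivP => E; apply/ret_equivP => z.
have gamma_eq : gamma_ r p c = gamma_ r q c.
  apply: (sigma_inj solr (a := sigma_ r c p)).
  by rewrite (sigma_sigma_gamma solr) E (sigma_sigma_gamma solr).
apply: (sigma_inj solr (a := c)).
by rewrite (sigma_braid solr c p z) (sigma_braid solr c q z) E gamma_eq.
Qed.

(* Conversely it preserves ~: the map (p, q) |-> (sigma_c p, sigma_c q) is
   injective and its preimage of the finite relation ~ is contained in ~,
   hence equal to it by counting. *)
Lemma ret_equiv_translate c p q :
  ret_equiv p q -> ret_equiv (sigma_ r c p) (sigma_ r c q).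
Proof.
pose R := [set pq : X * X | ret_equiv pq.1 pq.2].
pose Phi (pq : X * X) := (sigma_ r c pq.1, sigma_ r c pq.2).
have Phi_inj : injective Phi.
  by move=> [a b] [a' b'] [/(sigma_inj solr)-> /(sigma_inj solr)->].
have sub : Phi @^-1: R \subset R.
  by apply/subsetP => -[a b]; rewrite !inE; apply: ret_equiv_cancel.
have preR : Phi @^-1: R = R.
  by apply/eqP; rewrite eqEcard sub (card_preimset _ Phi_inj) leqnn.
by move=> pq; have := preR; move/setP/(_ (p, q)); rewrite !inE pq.
Qed.

Lemma ret_equiv_sigma a a' b b' : ret_equiv a a' -> ret_equiv b b' ->
  ret_equiv (sigma_ r a b) (sigma_ r a' b').
Proof. by move=> /ret_equivP Ea /(ret_equiv_translate a); rewrite !Ea. Qed.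

Lemma ret_equiv_gamma a a' b b' : ret_equiv a a' -> ret_equiv b b' ->
  ret_equiv (gamma_ r b a) (gamma_ r b' a').
Proof.
move=> Ea Eb; apply: (@ret_equiv_cancel (sigma_ r a b)).
rewrite (sigma_sigma_gamma solr); move/ret_equivP: (ret_equiv_sigma Ea Eb) => ->.
by rewrite (sigma_sigma_gamma solr).
Qed.

Definition ret_type : finType := {g : {ffun X -> X} | g \in codom sigma_ffun}.

Definition ret_proj (x : X) : ret_type := exist _ (sigma_ffun x) (codom_f _ x).

Definition ret_rep (A : ret_type) : X := iinv (valP A).

Definition ret_map (p : ret_type * ret_type) : ret_type * ret_type :=
  (ret_proj (sigma_ r (ret_rep p.1) (ret_rep p.2)),
   ret_proj (gamma_ r (ret_rep p.2) (ret_rep p.1))).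

Lemma ret_proj_eq x y : ret_equiv x y -> ret_proj x = ret_proj y.
Proof. by move/eqP => E; apply: val_inj. Qed.

Lemma ret_rep_equiv x : ret_equiv (ret_rep (ret_proj x)) x.
Proof. exact/eqP/(f_iinv (valP (ret_proj x))). Qed.

Lemma ret_proj_onto A : exists x, ret_proj x = A.
Proof.
by case: A => g g_codom; exists (iinv g_codom); apply: val_inj; apply: f_iinv.
Qed.

(* ret_map does not depend on the representatives, since ~ is compatible
   with r. *)
Lemma ret_map_proj a b :
  ret_map (ret_proj a, ret_proj b) =
  (ret_proj (r (a, b)).1, ret_proj (r (a, b)).2).
Proof.
rewrite r_pair /ret_map /=.
by congr pair; apply: ret_proj_eq;
  [apply: ret_equiv_sigma | apply: ret_equiv_gamma]; apply: ret_rep_equiv.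
Qed.

Lemma ret_solution : is_solution ret_map.
Proof. exact: quotient_solution solr ret_proj_onto ret_map_proj. Qed.

Lemma ret_hom : sol_hom r ret_map ret_proj.
Proof. by move=> a b; rewrite /sigma_ ret_map_proj r_pair. Qed.

End Retraction.

Definition perm_map (Y : Type) (u u' : Y -> Y) (p : Y * Y) : Y * Y :=
  (u p.2, u' p.1).

Lemma perm_solution (Y : Type) (u u' : Y -> Y) :
  cancel u u' -> cancel u' u -> is_solution (perm_map u u').
Proof.
move=> uK u'K; split.
- by case=> a b; rewrite /perm_map /= uK u'K.
- by move=> a; exists u'.
- by move=> a; exists u.
- by case=> [[a b] c]; rewrite /r12 /r23 /perm_map /= uK u'K.
Qed.

Lemma perm_hom (X Y : Type) (r : X * X -> X * X) (t : X -> X) (u u' : Y -> Y)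
    (g : X -> Y) :
  (forall a, sigma_ r a =1 t) -> (forall z, g (t z) = u (g z)) ->
  sol_hom r (perm_map u u') g.
Proof. by move=> sigma_t gt x y; rewrite sigma_t gt. Qed.

Lemma simple_image_card (X Y : finType) (r : X * X -> X * X)
    (s : Y * Y -> Y * Y) (f : X -> Y) :
  simple_solution r -> is_solution s -> sol_hom r s f ->
  (forall y, exists x, f x = y) -> #|Y| = 1 \/ #|Y| = #|X|.
Proof.
case=> _ simple_r sols homf f_onto.
case: (simple_r Y s f sols homf f_onto) => [/bij_eq_card-> | [y0 Y_pt]]; first by right.
by left; apply: (eq_card1 (x := y0)) => y; rewrite !inE [y]Y_pt eqxx.
Qed.

Section ConstantSigma.
Variables (X : finType) (r : X * X -> X * X) (t : X -> X).
Hypotheses (simple_r : simple_solution r) (sigma_t : forall a, sigma_ r a =1 t).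
Hypothesis t_inj : injective t.

(* If t has an orbit missing some point, mapping x to "x lies in the orbit of
   x0" is an epimorphism onto a 2-element solution, so |X| = 2. *)
Lemma intransitive_card2 x0 x1 : ~~ fconnect t x0 x1 -> #|X| = 2.
Proof.
move=> not_conn; pose g x := fconnect t x0 x.
have homg : sol_hom r (perm_map id id) g.
  by apply: perm_hom sigma_t _ => z; rewrite /g -same_fconnect1_r.
have g_onto b : exists x, g x = b.
  by case: b; [exists x0; apply: connect0 | exists x1; apply/negbTE].
have := simple_image_card simple_r (perm_solution (@erefl _) (@erefl _)) homg g_onto.
by rewrite card_bool => -[].
Qed.

Section Cycle.
Variable x0 : X.
Hypothesis t_trans : forall x, fconnect t x0 x.

Lemma cycle_order : order t x0 = #|X|.
Proof. by apply: eq_card => x; rewrite inE t_trans. Qed.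

Lemma findex_step z : findex t x0 (t z) = (findex t x0 z).+1 %% #|X|.
Proof.
have k_lt := findex_max (t_trans z); rewrite cycle_order in k_lt.
rewrite -{1}(iter_findex (t_trans z)) -iterS.
case: (ltngtP (findex t x0 z).+1 #|X|) => [lt | gt | eq].
- by rewrite modn_small // findex_iter // cycle_order.
- by rewrite ltnNge k_lt in gt.
- by rewrite eq -{1}cycle_order iter_order // findex0 modnn.
Qed.

(* Reducing the position modulo the least prime divisor p of |X| gives an
   epimorphism onto the cyclic permutation solution on Z/p, so |X| = p. *)
Lemma transitive_prime : prime #|X|.
Proof.
have X_gt1 : 1 < #|X|.
  by case: simple_r => -[a [b ab]] _; apply/card_gt1P; exists a, b; split=> //; apply/eqP.
have p_prime := pdiv_prime X_gt1; have p_gt0 := prime_gt0 p_prime.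
pose g x : 'I_(pdiv #|X|) := Ordinal (ltn_pmod (findex t x0 x) p_gt0).
have homg : sol_hom r (perm_map (@ordS _) (@ord_pred _)) g.
  apply: perm_hom sigma_t _ => z; apply: val_inj => /=.
  by rewrite findex_step modn_dvdm ?pdiv_dvd // -[in RHS]addn1 modnDml addn1.
have g_onto i : exists x, g x = i.
  exists (iter i t x0); apply: val_inj => /=.
  rewrite findex_iter ?modn_small // cycle_order.
  exact: leq_trans (ltn_ord i) (pdiv_leq (ltnW X_gt1)).
have := simple_image_card simple_r (perm_solution (@ordSK _) (@ord_predK _)) homg g_onto.
rewrite card_ord => -[p1 | <- //].
by move: p_prime; rewrite p1.
Qed.

End Cycle.

Lemma constant_sigma_prime : prime #|X|.
Proof.
have [[x0 _] _] := simple_r.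
case: (boolP [exists x1, ~~ fconnect t x0 x1]) => [/existsP[x1] | ].
  by move/intransitive_card2->.
rewrite negb_exists => /forallP t_trans.
by apply: (@transitive_prime x0) => x; apply/negPn.
Qed.

End ConstantSigma.

Theorem mainTheorem2 (X : finType) (r : X * X -> X * X) :
  is_solution r -> simple_solution r -> ~~ prime #|X| -> irretractable r.
Proof.
move=> solr simple_r not_prime x y neq_xy sigma_xy.
have [_ simple_ret] := simple_r.
case: (simple_ret _ _ _ (ret_solution solr) (ret_hom solr) (ret_proj_onto (r := r))).
  move/bij_inj => proj_inj; apply: neq_xy; apply: proj_inj.
  by apply: ret_proj_eq; apply/ret_equivP => z; rewrite sigma_xy.
(* Ret(X) is a point: every sigma_c equals sigma_x. *)
case=> A0 ret_pt; have sigma_const c : sigma_ r c =1 sigma_ r x.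
  apply/ret_equivP/eqP; have := ret_pt (ret_proj r c).
  by rewrite -(ret_pt (ret_proj r x)) => /(congr1 val).
have := constant_sigma_prime simple_r sigma_const (sigma_inj solr (a := x)).
by rewrite (negbTE not_prime).
Qed.
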